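(* For any $a,b,c,d\in\mathbb R$, $$3\max(a,b,c,d)+\max(a,d)+\max(b,d)+\max(c,d)\le2\max(a,b,d)+2\max(a,c,d)+2\max(b,c,d).$$ *)

From Stdlib Require Import Reals.

(* Put A = max(a,d), B = max(b,d), C = max(c,d).  Every maximum in the
   inequality that involves d is a maximum of A, B, C, so it becomes
   3 max(A,B,C) + A + B + C <= 2 (max(A,B) + max(A,C) + max(B,C)),
   which is the sum over x in {A,B,C} of
   max(x,y) + max(x,z) >= max(x,y,z) + x, y and z being the other two. *)

From Stdlib Require Import Reals Lra.
Open Scope R_scope.

Lemma Rmax_Rmax_distr_r (x y d : R) :
  Rmax (Rmax x y) d = Rmax (Rmax x d) (Rmax y d).
Proof. unfold Rmax; repeat destruct Rle_dec; lra. Qed.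

Lemma Rmax3_plus_le_Rmax_plus_Rmax (x y z : R) :
  Rmax (Rmax x y) z + x <= Rmax x y + Rmax x z.
Proof. unfold Rmax; repeat destruct Rle_dec; lra. Qed.

Lemma Rmax3_sum_le_pairwise_Rmax_sum (A B C : R) :
  3 * Rmax (Rmax A B) C + A + B + C
  <= 2 * Rmax A B + 2 * Rmax A C + 2 * Rmax B C.
Proof.
  assert (HA := Rmax3_plus_le_Rmax_plus_Rmax A B C).
  assert (HB := Rmax3_plus_le_Rmax_plus_Rmax B A C).
  assert (HC := Rmax3_plus_le_Rmax_plus_Rmax C A B).
  rewrite (Rmax_comm B A) in HB.
  rewrite (Rmax_comm C A), (Rmax_comm C B), (Rmax_comm (Rmax A C) B),
    Rmax_assoc, (Rmax_comm B A) in HC.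
  lra.
Qed.

Theorem lemma11 (a b c d : R) :
  3 * Rmax (Rmax a b) (Rmax c d) + Rmax a d + Rmax b d + Rmax c d
  <= 2 * Rmax (Rmax a b) d + 2 * Rmax (Rmax a c) d + 2 * Rmax (Rmax b c) d.
Proof.
  rewrite Rmax_assoc, !(Rmax_Rmax_distr_r _ _ d).
  apply Rmax3_sum_le_pairwise_Rmax_sum.
Qed.
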